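(* Let $t$ be a positive integer, let $\mathbb{F}_{2^t}=\{\alpha_1,\ldots,\alpha_{2^t}\}$ be the finite field of order $2^t$, fix a group isomorphism $(\mathbb{F}_{2^t},+)\cong\mathbb{Z}_2^t$, and define $\phi:\mathbb{F}_{2^t}\to GL_{2^t}(\mathbb{R})$ by $\phi(x)=r^{x_1}\otimes\cdots\otimes r^{x_t}$ where $(x_1,\ldots,x_t)\in\mathbb{Z}_2^t$ is the image of $x$ and $r=\begin{pmatrix}0&1\\1&0\end{pmatrix}$. Let $W=(w_{kl})_{k,l=1}^{2^t}$ be a Hadamard matrix of order $2^t$, and for $i\in\{1,\ldots,2^t\}$ let $W_i$ be the $2^{2t}\times2^{2t}$ block matrix whose $(k,l)$-block is $w_{kl}\phi(\alpha_i\alpha_l)$. Then for any distinct $i,j\in\{1,\ldots,2^t\}$, $W_iW_j^\top$ is a Bush-type Hadamard matrix of order $2^{2t}$.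
   Context: A Hadamard matrix of order $n$ is an $n\times n$ $(1,-1)$-matrix $H$ with $HH^\top=nI_n$. A Hadamard matrix $H$ of order $n^2$ is of Bush-type if, partitioned into $n\times n$ blocks $H=(H_{ij})_{i,j=1}^n$, it satisfies $H_{ii}=J_n$ for all $i$ and $H_{ij}J_n=J_nH_{ij}=O_n$ for all $i\neq j$, where $J_n$ is the all-ones and $O_n$ the zero $n\times n$ matrix. *)

From HB Require Import structures.
From mathcomp Require Import all_boot all_order all_algebra all_field.
From mathcomp Require Import mxtens.
From mathcomp Require Import reals.
Set Implicit Arguments. Unset Strict Implicit. Unset Printing Implicit Defensive.
Import Order.TTheory GRing.Theory Num.Theory.
Local Open Scope ring_scope.

Section Defs.
Variable R : realType.

Definition hadamard (n : nat) (H : 'M[R]_n) : Prop :=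
  (forall i j, H i j = 1 \/ H i j = -1) /\ H *m H^T = (n%:R)%:M.

(* The (k,l) block (of size m x m) of a matrix of order n*m, blocks indexed
   row-major: row index k*m + a  <->  (k, a). *)
Definition block (n m : nat) (H : 'M[R]_(n * m)) (k l : 'I_n) : 'M[R]_m :=
  \matrix_(a, b) H (mxtens_index (k, a)) (mxtens_index (l, b)).

Definition blockmx (n m : nat) (B : 'I_n -> 'I_n -> 'M[R]_m) : 'M[R]_(n * m) :=
  \matrix_(p, q) B (mxtens_unindex p).1 (mxtens_unindex q).1
                   (mxtens_unindex p).2 (mxtens_unindex q).2.

Definition bush_type (n : nat) (H : 'M[R]_(n * n)) : Prop :=
  hadamard H /\
  (forall k, block H k k = const_mx 1) /\
  (forall k l, k != l ->
     block H k l *m (const_mx 1 : 'M[R]_n) = 0 /\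
     (const_mx 1 : 'M[R]_n) *m block H k l = 0).

Definition rmat : 'M[R]_2 := \matrix_(a, b) (if a == b then 0 else 1).

Fixpoint kron_pow (t : nat) (e : nat -> nat) : 'M[R]_(2 ^ t) :=
  match t return 'M[R]_(2 ^ t) with
  | 0 => 1%:M
  | t'.+1 => castmx (esym (expnS 2 t'), esym (expnS 2 t'))
               (rmat ^+ e 0%N *t kron_pow t' (fun k => e k.+1))
  end.

Definition phi (F : finFieldType) (t : nat) (iso : F -> 'rV['Z_2]_t) (x : F)
  : 'M[R]_(2 ^ t) :=
  kron_pow t (fun k => match insub k with
                       | Some i => nat_of_ord (iso x 0 i)
                       | None => 0%N
                       end).

Definition Wmat (F : finFieldType) (t : nat) (iso : F -> 'rV['Z_2]_t)
  (alpha : 'I_(2 ^ t) -> F) (W : 'M[R]_(2 ^ t)) (i : 'I_(2 ^ t))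
  : 'M[R]_(2 ^ t * 2 ^ t) :=
  blockmx (fun k l => W k l *: phi iso (alpha i * alpha l)).

End Defs.

From HB Require Import structures.
From mathcomp Require Import all_boot all_order all_algebra all_field.
From mathcomp Require Import mxtens.
From mathcomp Require Import reals.
Import Order.TTheory GRing.Theory Num.Theory.
Local Open Scope ring_scope.
Set Implicit Arguments. Unset Strict Implicit. Unset Printing Implicit Defensive.

(* For [i <> j], the [(k, m)] block of [W_i W_j^T] is
   [\sum_l w_kl w_ml phi(alpha_i alpha_l) phi(alpha_j alpha_l)^T
      = \sum_l w_kl w_ml phi((alpha_i + alpha_j) alpha_l)],
   because [phi] is a homomorphism into symmetric permutation matrices
   ([phi(x)_ab = 1] iff [x = a + b] in [Z_2^t]). As [l] varies,
   [(alpha_i + alpha_j) alpha_l] runs over all of [F], and the [phi(x)] have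
   disjoint supports covering [J]: every entry of the block is a single
   product [w_kl w_ml = +-1], the diagonal blocks are [\sum_x phi(x) = J], and
   the off-diagonal blocks have line sums [\sum_l w_kl w_ml = 0].  Finally
   [W_i W_i^T = n I] (blockwise [\sum_l w_kl w_ml phi(0)]), so the product is
   Hadamard: [(W_i W_j^T)(W_i W_j^T)^T = W_i (W_j^T W_j) W_i^T = n^2 I]. *)

Lemma sum_mul_eq_can (R : pzSemiRingType) (T T' : finType) (f : T -> T')
    (g : T' -> T) (fK : cancel f g) (gK : cancel g f) (F : T -> R) (v : T') :
  \sum_l F l * (f l == v)%:R = F (g v).
Proof.
rewrite (bigD1 (g v)) //= gK eqxx mulr1 big1 ?addr0 // => l.
by rewrite (can2_eq fK gK) => /negbTE->; rewrite mulr0.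
Qed.

Section CharTwo.
Variable V : lmodType 'Z_2.
Implicit Types u v : V.

Lemma addrr_Z2 v : v + v = 0.
Proof.
by rewrite -mulr2n -scaler_nat (_ : 2%:R = 0 :> 'Z_2) ?scale0r //; apply: val_inj.
Qed.

Lemma oppr_Z2 v : - v = v.
Proof. by apply/eqP; rewrite eq_sym -addr_eq0 addrr_Z2. Qed.

Lemma eq_Z2 u v : (u == v) = (u + v == 0).
Proof. by rewrite -subr_eq0 oppr_Z2. Qed.

End CharTwo.

Lemma addrr_inj_Z2 (U : zmodType) (V : lmodType 'Z_2) (f : U -> V) :
  injective f -> {morph f : x y / x + y} -> forall x : U, x + x = 0.
Proof.
move=> f_inj f_add x; apply: f_inj.
by rewrite f_add addrr_Z2; apply: (@addrI _ (f 0)); rewrite -f_add !addr0.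
Qed.

Lemma mul_pm1 (R : pzRingType) (x y : R) :
  x = 1 \/ x = -1 -> y = 1 \/ y = -1 -> x * y = 1 \/ x * y = -1.
Proof.
by case=> ->; case=> ->; rewrite ?mulr1 ?mulrN1 ?opprK; [left|right|right|left].
Qed.

Lemma mulmx_scalarC (K : fieldType) n (A B : 'M[K]_n) (c : K) :
  c != 0 -> A *m B = c%:M -> B *m A = c%:M.
Proof.
move=> c_neq0 AB; have : A *m (c^-1 *: B) = 1%:M.
  by rewrite -scalemxAr AB scale_scalar_mx mulVf.
move/mulmx1C; rewrite -scalemxAl => /(congr1 ( *:%R c)).
by rewrite scalerA mulfV // scale1r scale_scalar_mx mulr1.
Qed.

Section BlockMatrix.
Variables (R : realType) (n m : nat).
Local Notation ui := (@mxtens_unindex n m).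
Implicit Types B C : 'I_n -> 'I_n -> 'M[R]_m.

Lemma block_blockmx B k l : block (blockmx B) k l = B k l.
Proof. by apply/matrixP => a b; rewrite !mxE !mxtens_indexK. Qed.

Lemma eq_blockmx B C : (forall k l, B k l = C k l) -> blockmx B = blockmx C.
Proof. by move=> eq_BC; apply/matrixP => p q; rewrite !mxE eq_BC. Qed.

Lemma trmx_blockmx B : (blockmx B)^T = blockmx (fun k l => (B l k)^T).
Proof. by apply/matrixP => p q; rewrite !mxE. Qed.

Lemma mulmx_blockmx B C :
  blockmx B *m blockmx C = blockmx (fun k l => \sum_c B k c *m C c l).
Proof.
apply/matrixP => p q; rewrite !mxE summxE.
rewrite (reindex (@mxtens_index n m)) /=; last first.
  by exists ui => r _; rewrite ?mxtens_indexK ?mxtens_unindexK.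
under [RHS]eq_bigr do rewrite mxE.
rewrite pair_big /=; apply: eq_bigr => -[c d] _.
by rewrite !mxE mxtens_indexK.
Qed.

Lemma blockmx_scalar (x : R) :
  blockmx (fun k l : 'I_n => (x *+ (k == l))%:M : 'M_m) = x%:M.
Proof.
apply/matrixP => p q; rewrite !mxE -mulrnA mulnb.
by rewrite -(inj_eq (can_inj (@mxtens_unindexK n m))) xpair_eqE.
Qed.

End BlockMatrix.

(* Binary digits of [a : 'I_(2 ^ t)], digit 0 being the leading one, as
   in the first tensor factor of [kron_pow]. *)
Fixpoint ord_bit (t : nat) : 'I_(2 ^ t) -> nat -> bool :=
  match t return 'I_(2 ^ t) -> nat -> bool with
  | 0 => fun _ _ => false
  | t'.+1 => fun a k =>
      let ab := mxtens_unindex (cast_ord (expnS 2 t') a) in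
      if k is k'.+1 then ord_bit ab.2 k' else odd ab.1
  end.

Definition ord_bits t (a : 'I_(2 ^ t)) : 'rV['Z_2]_t := \row_k (ord_bit a k)%:R.

Lemma ord_bit_inj t (a b : 'I_(2 ^ t)) :
  (forall k, (k < t)%N -> ord_bit a k = ord_bit b k) -> a = b.
Proof.
elim: t a b => [|t IH] a b eq_ab; first by rewrite (ord1 a) (ord1 b).
apply: (@cast_ord_inj _ _ (expnS 2 t)); apply: (can_inj (@mxtens_unindexK _ _)).
set ua := mxtens_unindex (cast_ord (expnS 2 t) a).
set ub := mxtens_unindex (cast_ord (expnS 2 t) b).
have eq_head : odd ua.1 = odd ub.1 := eq_ab 0%N isT.
have eq_tail k : (k < t)%N -> ord_bit ua.2 k = ord_bit ub.2 k := eq_ab k.+1.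
clearbody ua ub; case: ua ub => p q [p' q'] /= in eq_head eq_tail *.
rewrite (IH _ _ eq_tail); congr (_, _); apply: val_inj.
by move: eq_head; case: p => [[|[|?]] ?]; case: p' => [[|[|?]] ?].
Qed.

Lemma ord_bits_inj t : injective (@ord_bits t).
Proof.
move=> a b /rowP eq_ab; apply: ord_bit_inj => k lt_kt.
by have := eq_ab (Ordinal lt_kt); rewrite !mxE; do 2!case: ord_bit.
Qed.

Lemma ord_bits_bij t : bijective (@ord_bits t).
Proof.
by apply: inj_card_bij; rewrite ?card_mx ?card_ord ?mul1n //; apply: ord_bits_inj.
Qed.

Lemma forall_ordS t (P : 'I_t.+1 -> bool) :
  [forall k, P k] = P ord0 && [forall k : 'I_t, P (lift ord0 k)].
Proof.
apply/forallP/andP => [P_all|[P0 /forallP P_lift] k].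
  by split; [|apply/forallP].
by case: (unliftP ord0 k) => [j ->|->].
Qed.

Section KronPow.
Variable R : realType.

Lemma rmatX e : rmat R ^+ e = if odd e then rmat R else 1.
Proof.
have rmat2 : rmat R * rmat R = 1.
  apply/matrixP => a b; rewrite !mxE !big_ord_recl big_ord0 !mxE.
  by case: a => [[|[|?]] ?] //; case: b => [[|[|?]] ?];
    rewrite //= ?mulr0 ?mul0r ?mulr1 ?addr0 ?add0r.
elim: e => [|e IH]; first by rewrite expr0.
by rewrite exprS IH /=; case: (odd e); rewrite ?rmat2 ?mulr1.
Qed.

Lemma rmatXE e (a b : 'I_2) : (rmat R ^+ e) a b = (odd e == odd a (+) odd b)%:R.
Proof.
by rewrite rmatX; case: (odd e); rewrite !mxE;
  case: a => [[|[|?]] ?] //; case: b => [[|[|?]] ?].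
Qed.

Lemma kron_powE t e a b :
  kron_pow R t e a b =
  [forall k : 'I_t, odd (e k) == ord_bit a k (+) ord_bit b k]%:R.
Proof.
elim: t e a b => [|t IH] e a b.
  rewrite /= mxE (ord1 a) (ord1 b) eqxx.
  by case: forallP => // all_k; exfalso; apply: all_k => -[].
have cast_irr (eq_t : (2 ^ t.+1 = 2 * 2 ^ t)%N) c :
  cast_ord eq_t c = cast_ord (expnS 2 t) c by apply: val_inj.
by rewrite /= castmxE mxE IH forall_ordS rmatXE -natrM mulnb !cast_irr.
Qed.

End KronPow.

Section Phi.
Variables (R : realType) (F : finFieldType) (t : nat) (iso : F -> 'rV['Z_2]_t).
Local Notation phi := (phi R iso).
Local Notation bits := (@ord_bits t).
Local Notation J := (const_mx 1 : 'M[R]_(2 ^ t)).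

Lemma phiE x a b : phi x a b = (iso x == bits a + bits b)%:R.
Proof.
rewrite /phi kron_powE; congr (nat_of_bool _)%:R.
apply/forallP/eqP => [eq_bits|->] /=; last by move=> k; rewrite valK !mxE; do 2!case: ord_bit.
apply/rowP => k; have := eq_bits k; rewrite valK !mxE.
by case: (iso x 0 k) => -[|[|?]] ? //=; do 2!case: ord_bit => //=; move=> _; apply: val_inj.
Qed.

Lemma trmx_phi x : (phi x)^T = phi x.
Proof. by apply/matrixP => a b; rewrite mxE !phiE addrC. Qed.

Lemma phi_mul_const x : phi x *m J = J.
Proof.
have [g bitsK gK] := ord_bits_bij t.
apply/matrixP => a b; rewrite !mxE.
under eq_bigr => d _ do
  rewrite mxE phiE mulr1 eq_Z2 addrA -eq_Z2 eq_sym -[_%:R]mul1r.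
exact: sum_mul_eq_can.
Qed.

Lemma const_mul_phi x : J *m phi x = J.
Proof.
by rewrite -[LHS]trmxK trmx_mul trmx_phi !trmx_const phi_mul_const trmx_const.
Qed.

Lemma sum_scale_phi_mul_const (T : finType) (eps : T -> R) (gamma : T -> F) :
  (\sum_l eps l *: phi (gamma l)) *m J = (\sum_l eps l) *: J.
Proof.
rewrite mulmx_suml scaler_suml.
by apply: eq_bigr => l _; rewrite -scalemxAl phi_mul_const.
Qed.

Lemma const_mul_sum_scale_phi (T : finType) (eps : T -> R) (gamma : T -> F) :
  J *m (\sum_l eps l *: phi (gamma l)) = (\sum_l eps l) *: J.
Proof.
rewrite mulmx_sumr scaler_suml.
by apply: eq_bigr => l _; rewrite -scalemxAr const_mul_phi.
Qed.

Section Reindexed.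
Variables (T : finType) (gamma : T -> F) (g : 'rV['Z_2]_t -> T).
Hypotheses (gammaK : cancel (iso \o gamma) g) (gK : cancel g (iso \o gamma)).

Lemma sum_scale_phiE (eps : T -> R) a b :
  (\sum_l eps l *: phi (gamma l)) a b = eps (g (bits a + bits b)).
Proof.
rewrite summxE; under eq_bigr do rewrite mxE phiE.
exact: (sum_mul_eq_can gammaK gK eps).
Qed.

Lemma sum_phi : \sum_l phi (gamma l) = J.
Proof.
apply/matrixP => a b; rewrite mxE -(sum_scale_phiE (fun=> 1) a b).
by congr (fun_of_matrix _ a b); apply: eq_bigr => l _; rewrite scale1r.
Qed.

End Reindexed.

Hypothesis iso_add : {morph iso : x y / x + y}.

Lemma iso0 : iso 0 = 0.
Proof. by apply: (@addrI _ (iso 0)); rewrite -iso_add !addr0. Qed.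

Lemma phi0 : phi 0 = 1%:M.
Proof.
apply/matrixP => a b; rewrite phiE iso0 mxE eq_sym -eq_Z2.
by rewrite (inj_eq (@ord_bits_inj t)).
Qed.

Lemma phi_mul x y : phi x *m phi y = phi (x + y).
Proof.
have [g bitsK gK] := ord_bits_bij t.
apply/matrixP => a b; rewrite mxE phiE iso_add.
under eq_bigr => d _ do rewrite !phiE [(iso x == _)]eq_Z2 addrA -eq_Z2 eq_sym mulrC.
rewrite (sum_mul_eq_can bitsK gK) gK; congr (_%:R).
by rewrite eq_Z2 (eq_Z2 (iso x + _)) !addrA [iso y + _]addrC.
Qed.

Lemma phi_mulvv x : phi x *m phi x = 1%:M.
Proof.
rewrite phi_mul -phi0; apply/matrixP => a b.
by rewrite !phiE iso_add iso0 addrr_Z2.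
Qed.

End Phi.

Section Hadamard.
Variables (R : realType) (n : nat) (H : 'M[R]_n).
Hypothesis H_had : hadamard H.

Lemma hadamard_dot k m : \sum_l H k l * H m l = n%:R *+ (k == m).
Proof.
have := congr1 (fun M : 'M[R]_n => M k m) H_had.2; rewrite !mxE => <-.
by apply: eq_bigr => l _; rewrite mxE.
Qed.

Lemma hadamard_sqr k l : H k l * H k l = 1.
Proof. by case: (H_had.1 k l) => ->; rewrite ?mulr1 ?mulrN1 ?opprK. Qed.

End Hadamard.

Section WmatProduct.
Variables (R : realType) (F : finFieldType) (t : nat) (iso : F -> 'rV['Z_2]_t)
  (alpha : 'I_(2 ^ t) -> F) (W : 'M[R]_(2 ^ t)).
Local Notation Wmat := (Wmat iso alpha W).
Local Notation phi := (phi R iso).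

Lemma Wmat_mul_tr i j :
  Wmat i *m (Wmat j)^T =
  blockmx (fun k m => \sum_l (W k l * W m l) *:
                        (phi (alpha i * alpha l) *m phi (alpha j * alpha l))).
Proof.
rewrite trmx_blockmx mulmx_blockmx; apply: eq_blockmx => k m.
apply: eq_bigr => l _.
by rewrite linearZ /= trmx_phi -scalemxAl -scalemxAr scalerA.
Qed.

Hypotheses (iso_add : {morph iso : x y / x + y}) (W_had : hadamard W).

Lemma Wmat_mul_tr_self i : Wmat i *m (Wmat i)^T = (2 ^ t)%:R%:M.
Proof.
rewrite Wmat_mul_tr -blockmx_scalar; apply: eq_blockmx => k m.
under eq_bigr do rewrite phi_mulvv //.
by rewrite -scaler_suml hadamard_dot // scale_scalar_mx mulr1.
Qed.

Lemma Wmat_tr_mul_self i : (Wmat i)^T *m Wmat i = (2 ^ t)%:R%:M.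
Proof.
by apply: mulmx_scalarC (Wmat_mul_tr_self i); rewrite pnatr_eq0 -lt0n expn_gt0.
Qed.

End WmatProduct.

Theorem proposition5p1 (R : realType) (t : nat) (F : finFieldType)
  (iso : F -> 'rV['Z_2]_t) (alpha : 'I_(2 ^ t) -> F) (W : 'M[R]_(2 ^ t))
  (i j : 'I_(2 ^ t)) :
  (0 < t)%N ->
  #|F| = (2 ^ t)%N ->
  (forall x y, iso (x + y) = iso x + iso y) ->
  bijective iso ->
  bijective alpha ->
  hadamard W ->
  i != j ->
  bush_type (Wmat iso alpha W i *m (Wmat iso alpha W j)^T).
Proof.
(* [0 < t] and [#|F| = 2 ^ t] already follow from the bijectivity of [iso]. *)
move=> _ _ iso_add iso_bij alpha_bij W_had neq_ij.
set c := alpha i + alpha j.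
have c_neq0 : c != 0.
  apply: contra neq_ij => /eqP c0; apply/eqP/(bij_inj alpha_bij).
  rewrite -[alpha i]addr0 -(addrr_inj_Z2 (bij_inj iso_bij) iso_add (alpha j)).
  by rewrite addrA -/c c0 add0r.
have [g gammaK gK] : bijective (iso \o (fun l => c * alpha l)).
  by apply: bij_comp iso_bij (bij_comp _ alpha_bij); exists ( *%R c^-1);
    [apply: mulKf | apply: mulVKf].
have blockE : Wmat iso alpha W i *m (Wmat iso alpha W j)^T =
    blockmx (fun k m => \sum_l (W k l * W m l) *: phi R iso (c * alpha l)).
  rewrite Wmat_mul_tr; apply: eq_blockmx => k m; apply: eq_bigr => l _.
  by rewrite phi_mul // -mulrDl.
split; [split|split].
- move=> p q; rewrite blockE mxE (sum_scale_phiE gammaK gK).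
  by apply: mul_pm1; apply: W_had.1.
- rewrite trmx_mul trmxK mulmxA -(mulmxA (Wmat _ _ _ i)) Wmat_tr_mul_self //.
  by rewrite mul_mx_scalar -scalemxAl Wmat_mul_tr_self // scale_scalar_mx natrM.
- move=> k; rewrite blockE block_blockmx.
  under eq_bigr do rewrite hadamard_sqr // scale1r.
  exact: sum_phi gammaK gK.
- move=> k m neq_km; rewrite blockE block_blockmx.
  rewrite sum_scale_phi_mul_const const_mul_sum_scale_phi.
  by rewrite hadamard_dot // (negbTE neq_km) mulr0n scale0r.
Qed.
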